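(* In the stochastic epidemic model described in the context (fixed population size $n$), for each $i,j\in[m]$ and $t\ge0$ let $\chi_{ij}=\chi_{ij}(t,\mathcal S,\mathcal I):=\mathbb{E}[1_{(a,b)}(t)\mid\mathcal S(t),\mathcal I(t)]=\Pr((a,b)\in E(t)\mid\mathcal S(t),\mathcal I(t))$ be the random variable giving the conditional probability that a pair of nodes $(a,b)\in\mathcal S_i(t)\times\mathcal I_j(t)$ is in contact at time $t$ given $(\mathcal S(t),\mathcal I(t))$. Then for all $t\ge0$ and $i\in[m]$ (with $'$ denoting the time derivative): (i) $\mathbb E[s_i]'=-\sum_{j=1}^m B_{ij}\mathbb E[n\chi_{ij}s_i\beta_j]$; (ii) $\mathbb E[\beta_i]'=\sum_{j=1}^m B_{ij}\mathbb E[n\chi_{ij}s_i\beta_j]-\gamma_i\mathbb E[\beta_i]$; (iii) $\mathbb E[s_i^2]'=-\sum_{j=1}^m\big(2B_{ij}\mathbb E[n\chi_{ij}s_i^2\beta_j]-B_{ij}\mathbb E[n\chi_{ij}s_i\beta_j]/n\big)$; (iv) $\mathbb E[\beta_i^2]'=\sum_{j=1}^m B_{ij}\big(2\mathbb E[n\chi_{ij}s_i\beta_j\beta_i]+\mathbb E[n\chi_{ij}s_i\beta_j]/n\big)-\gamma_i\big(2\mathbb E[\beta_i^2]-\mathbb E[\beta_i]/n\big)$.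
   Context: Stochastic epidemic model with population size $n$: node set $[n]$ partitioned into age groups $\mathcal A_1,\dots,\mathcal A_m$; parameters $B_{ij}\ge0$, $\rho_{ij}>0$ with $\rho_{ij}/n\le1$, $\gamma_i>0$, $\lambda>0$. A state consists of disease states $x_a\in\{0,1,-1\}$ (susceptible, infected, recovered), edge states $1_{(a,b)}\in\{0,1\}$ for ordered pairs of distinct nodes ($1$ = directed edge from $b$ to $a$), and auxiliary bits flipped at each update of a pair's edge state. With $\mathcal S_i(\mathbf x),\mathcal I_i(\mathbf x)$ the susceptible/infected nodes of $\mathcal A_i$ and $E_k^{(a)}(\mathbf x)=\sum_{c\in\mathcal I_k(\mathbf x)}1_{(a,c)}(\mathbf x)$, $\{\mathbf X(t)\}$ is a right-continuous time-homogeneous continuous-time Markov chain with only these transitions: susceptible $a\in\mathcal A_i$ becomes infected at rate $\sum_kB_{ik}E_k^{(a)}(\mathbf x)$; infected $a\in\mathcal A_i$ recovers at rate $\gamma_i$; the edge state of $(a,b)\in\mathcal A_i\times\mathcal A_j$ is updated to $1$ at rate $\lambda\rho_{ij}/n$ and to $0$ at rate $\lambda(1-\rho_{ij}/n)$ (auxiliary bit flipped each time). Notation: $\mathcal S_i(t)=\mathcal S_i(\mathbf X(t))$, $\mathcal I_i(t)=\mathcal I_i(\mathbf X(t))$, $\mathcal S(t)=\cup_i\mathcal S_i(t)$, $\mathcal I(t)=\cup_i\mathcal I_i(t)$, $E(t)$ the set of present edges, $1_{(a,b)}(t)=1_{(a,b)}(\mathbf X(t))$, $s_i=s_i(t)=|\mathcal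 S_i(t)|/n$, $\beta_i=\beta_i(t)=|\mathcal I_i(t)|/n$. The paper treats $\chi_{ij}$ as not depending on the particular pair $(a,b)\in\mathcal S_i(t)\times\mathcal I_j(t)$; when $\mathcal S_i(t)$ or $\mathcal I_j(t)$ is empty the products $s_i\beta_j$ vanish so the value of $\chi_{ij}$ there is immaterial. *)

From HB Require Import structures.
From mathcomp Require Import all_boot all_order all_algebra.
From mathcomp Require Import all_classical all_reals all_analysis.
Set Implicit Arguments. Unset Strict Implicit. Unset Printing Implicit Defensive.
Import Order.TTheory GRing.Theory Num.Theory.
Import numFieldNormedType.Exports.
Local Open Scope classical_set_scope.
Local Open Scope ring_scope.

(* Disease states: Sus (paper value 0), Inf (paper value 1),           *)
(* Rec (paper value -1).                                               *)
Inductive dis := Sus | Inf | Rec.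
Definition dis2o (x : dis) : 'I_3 :=
  match x with Sus => inord 0 | Inf => inord 1 | Rec => inord 2 end.
Definition o2dis (i : 'I_3) : dis :=
  match val i with 0 => Sus | 1 => Inf | _ => Rec end.
Lemma dis2oK : cancel dis2o o2dis.
Proof. by case; rewrite /o2dis /= inordK. Qed.
HB.instance Definition _ := Finite.copy dis (can_type dis2oK).

Definition pairT (n : nat) := {p : 'I_n * 'I_n | p.1 != p.2}.

(* A state: disease states, edge states, auxiliary bits. *)
Definition state (n : nat) :=
  ({ffun 'I_n -> dis} * {ffun pairT n -> bool} * {ffun pairT n -> bool})%type.

Section Model.
Variables (R : realType) (n m : nat) (grp : 'I_n -> 'I_m).
Variables (B rho : 'I_m -> 'I_m -> R) (gamma : 'I_m -> R) (lambda : R).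

Definition dstate (x : state n) : {ffun 'I_n -> dis} := x.1.1.
Definition estate (x : state n) : {ffun pairT n -> bool} := x.1.2.
Definition astate (x : state n) : {ffun pairT n -> bool} := x.2.

(* 1_{(a,b)}(x) as a boolean; false when a = b (no such pair). *)
Definition edgeb (x : state n) (a b : 'I_n) : bool :=
  if @insub _ (fun p : 'I_n * 'I_n => p.1 != p.2) (pairT n) (a, b) is Some p
  then estate x p else false.

Definition Sset (x : state n) : {set 'I_n} := [set a | dstate x a == Sus].
Definition Iset (x : state n) : {set 'I_n} := [set a | dstate x a == Inf].
Definition Sg (i : 'I_m) (x : state n) : {set 'I_n} :=
  [set a in Sset x | grp a == i].
Definition Ig (i : 'I_m) (x : state n) : {set 'I_n} :=
  [set a in Iset x | grp a == i].
Definition SIof (x : state n) : {set 'I_n} * {set 'I_n} := (Sset x, Iset x).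

Definition sfrac (i : 'I_m) (x : state n) : R := #|Sg i x|%:R / n%:R.
Definition bfrac (i : 'I_m) (x : state n) : R := #|Ig i x|%:R / n%:R.

Definition Ecount (k : 'I_m) (a : 'I_n) (x : state n) : R :=
  \sum_(c in Ig k x) (edgeb x a c)%:R.

Definition event := ('I_n + 'I_n + pairT n + pairT n)%type.

Definition set_dis (x : state n) (a : 'I_n) (v : dis) : state n :=
  ([ffun c => if c == a then v else dstate x c], estate x, astate x).
Definition set_edge (x : state n) (p : pairT n) (v : bool) : state n :=
  (dstate x, [ffun q => if q == p then v else estate x q],
             [ffun q => if q == p then ~~ astate x q else astate x q]).

Definition ev_target (e : event) (x : state n) : state n :=
  match e with
  | inl (inl (inl a)) => set_dis x a Inf
  | inl (inl (inr a)) => set_dis x a Rec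
  | inl (inr p) => set_edge x p true
  | inr p => set_edge x p false
  end.

Definition ev_rate (e : event) (x : state n) : R :=
  match e with
  | inl (inl (inl a)) =>
      if dstate x a == Sus then \sum_(k < m) B (grp a) k * Ecount k a x else 0
  | inl (inl (inr a)) => if dstate x a == Inf then gamma (grp a) else 0
  | inl (inr p) => lambda * rho (grp (val p).1) (grp (val p).2) / n%:R
  | inr p => lambda * (1 - rho (grp (val p).1) (grp (val p).2) / n%:R)
  end.

(* jump rate from x to y (x <> y) *)
Definition qrate (x y : state n) : R :=
  \sum_(e : event) (if ev_target e x == y then ev_rate e x else 0).

Definition genQ (x y : state n) : R :=
  if x == y then - \sum_(z | z != x) qrate x z else qrate x y.

End Model.

Definition prob (R : realType) d (Omega : measurableType d)
  (P : probability Omega R) (A : set Omega) : R := fine (P A).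

Definition is_ctmc (R : realType) d (Omega : measurableType d)
  (P : probability Omega R) (S : finType) (Q : S -> S -> R)
  (X : R -> Omega -> S) : Prop :=
  [/\ (forall t x, measurable [set w | X t w = x]),
      (forall w t, 0 <= t -> exists2 del : R, 0 < del &
          forall s, t <= s < t + del -> X s w = X t w) &
      exists Pt : R -> S -> S -> R,
        (forall x y,
           (fun h : R => h^-1 * (Pt h x y - (x == y)%:R)) @ 0^'+ --> Q x y) /\
        (forall (s h : R) (hist : seq (R * S)) (x y : S),
           0 <= s -> 0 <= h -> all (fun p => 0 <= p.1 <= s) hist ->
           P [set w | [/\ X (s + h) w = y, X s w = x &
                          all (fun p => X p.1 w == p.2) hist]]
           = ((Pt h x y)%:E *
             P [set w | X s w = x /\ all (fun p => X p.1 w == p.2) hist])%E)].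

Definition Ex (R : realType) d (Omega : measurableType d)
  (P : probability Omega R) (S : finType) (X : R -> Omega -> S) (t : R)
  (f : S -> R) : R :=
  \sum_(x : S) prob P [set w | X t w = x] * f x.

Definition deriv_at (R : realType) (F : R -> R) (t l : R) : Prop :=
  (fun h : R => h^-1 * (F (t + h) - F t)) @ 0^'+ --> l /\
  (0 < t -> (fun h : R => h^-1 * (F (t + h) - F t)) @ 0^'- --> l).

Arguments sfrac {R n m} grp i x.
Arguments bfrac {R n m} grp i x.

(* Kolmogorov's forward equation for the finite chain gives
   d/dt E[f(X t)] = E[(Q f)(X t)].  When f depends only on the disease
   states, edge updates do not change f, so (Q f)(x) is a sum over
   infections of susceptibles a in A_i, at rate sum_k B_ik E_k^(a), and
   recoveries of infected a in A_i, at rate gamma_i, each changing |S_i| or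
   |I_i| by one.  The infection part involves the number of S_i-I_j contacts;
   conditioning on (S(t), I(t)), each of the |S_i| |I_j| pairs is a contact
   with probability chi_ij, which turns it into E[chi_ij |S_i| |I_j| ...].
   Expanding the increments of s_i, beta_i, s_i^2, beta_i^2 gives (i)-(iv). *)

From HB Require Import structures.
From mathcomp Require Import all_boot all_order all_algebra.
From mathcomp Require Import all_classical all_reals all_analysis.
From mathcomp Require Import ring.
Set Implicit Arguments. Unset Strict Implicit. Unset Printing Implicit Defensive.
Import Order.TTheory GRing.Theory Num.Theory.
Import numFieldNormedType.Exports.
Local Open Scope classical_set_scope.
Local Open Scope ring_scope.

Section finite_valued_random_variable.
Context (R : realType) d (Omega : measurableType d) (P : probability Omega R).

Lemma prob_ge0 (A : set Omega) : 0 <= prob P A.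
Proof. by rewrite /prob fine_ge0. Qed.

Lemma prob_le1 (A : set Omega) : measurable A -> prob P A <= 1.
Proof.
by move=> mA; rewrite /prob -lee_fin fineK ?fin_num_measure ?probability_le1.
Qed.

Context (S : finType) (Y : Omega -> S).
Hypothesis mY : forall x, measurable [set w | Y w = x].

Let preimage_nil : [set w | Y w \in [::]] = set0.
Proof. by apply/seteqP; split=> w //=; rewrite in_nil. Qed.

Let preimage_cons x s :
  [set w | Y w \in x :: s] = [set w | Y w = x] `|` [set w | Y w \in s].
Proof.
apply/seteqP; split=> w /=; rewrite in_cons; first by case/orP=> [/eqP|]; [left|right].
by case=> [->|->]; rewrite ?eqxx ?orbT.
Qed.

Let measurable_preimage_seq (s : seq S) : measurable [set w | Y w \in s].
Proof.
elim: s => [|x s IH]; first by rewrite preimage_nil.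
by rewrite preimage_cons; exact: measurableU.
Qed.

Let measure_preimage_seq (s : seq S) : uniq s ->
  P [set w | Y w \in s] = (\sum_(x <- s) P [set w | Y w = x])%E.
Proof.
elim: s => [_|x s IH /= /andP[xNs us]]; first by rewrite preimage_nil big_nil measure0.
rewrite preimage_cons measureU // ?big_cons; first by congr (_ + _); exact: IH.
by apply/seteqP; split=> w // [/= -> ]; rewrite (negbTE xNs).
Qed.

Let preimage_filter (F : pred S) :
  [set w | F (Y w)] = [set w | Y w \in [seq x <- index_enum S | F x]].
Proof. by apply/seteqP; split=> w /=; rewrite mem_filter mem_index_enum andbT. Qed.

Lemma measurable_preimage (F : pred S) : measurable [set w | F (Y w)].
Proof. by rewrite preimage_filter. Qed.

Lemma prob_preimage (F : pred S) :
  prob P [set w | F (Y w)] = \sum_(x | F x) prob P [set w | Y w = x].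
Proof.
rewrite /prob preimage_filter measure_preimage_seq ?filter_uniq ?index_enum_uniq //.
by rewrite big_filter sum_fine // => x _; exact: fin_num_measure.
Qed.

End finite_valued_random_variable.

Lemma cvg_mul_bounded0 (R : realFieldType) T (F : set_system T) {FF : Filter F}
    (a b : T -> R) (M : R) :
  a @ F --> 0 -> (\forall h \near F, `|b h| <= M) ->
  (fun h => a h * b h) @ F --> 0.
Proof.
move=> a0 bM.
have aM0 : (fun h => `|a h| * M) @ F --> 0.
  by rewrite -(mul0r M) -(normr0 R); apply: cvgMr_tmp; exact: cvg_norm.
apply: (@squeeze_cvgr _ _ _ _ (fun h => - (`|a h| * M)) (fun h => `|a h| * M)).
- near=> h; rewrite -ler_norml normrM; apply: ler_wpM2l => //.
  by near: h.
- by rewrite -oppr0; exact: cvgN.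
- exact: aM0.
Unshelve. all: by end_near. Qed.

Section expectation.
Context (R : realType) d (Omega : measurableType d) {P : probability Omega R}.
Context {S : finType} {X : R -> Omega -> S} {t : R}.

Lemma eq_Ex (f g : S -> R) : f =1 g -> Ex P X t f = Ex P X t g.
Proof. by move=> fg; apply: eq_bigr => x _; rewrite fg. Qed.

Lemma ExD (f g : S -> R) : Ex P X t (fun x => f x + g x) = Ex P X t f + Ex P X t g.
Proof. by rewrite -big_split; apply: eq_bigr => x _; rewrite mulrDr. Qed.

Lemma ExZ (c : R) (f : S -> R) : Ex P X t (fun x => c * f x) = c * Ex P X t f.
Proof. by rewrite /Ex mulr_sumr; apply: eq_bigr => x _; rewrite mulrCA. Qed.

Lemma ExN (f : S -> R) : Ex P X t (fun x => - f x) = - Ex P X t f.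
Proof. by rewrite -mulN1r -ExZ; apply: eq_Ex => x; rewrite mulN1r. Qed.

Lemma Ex_sum (I : Type) (r : seq I) (Pr : pred I) (F : I -> S -> R) :
  Ex P X t (fun x => \sum_(j <- r | Pr j) F j x) = \sum_(j <- r | Pr j) Ex P X t (F j).
Proof.
rewrite /Ex exchange_big /=; apply: eq_bigr => x _; exact: mulr_sumr.
Qed.

End expectation.

Section kolmogorov_forward_equation.
Context (R : realType) d (Omega : measurableType d) (P : probability Omega R).
Context (S : finType) (Q : S -> S -> R) (X : R -> Omega -> S).
Context (Pt : R -> S -> S -> R).
Hypothesis mX : forall t x, measurable [set w | X t w = x].
Hypothesis Pt_generator : forall x y,
  (fun h : R => h^-1 * (Pt h x y - (x == y)%:R)) @ 0^'+ --> Q x y.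
Hypothesis Pt_markov : forall (s h : R) (hist : seq (R * S)) (x y : S),
  0 <= s -> 0 <= h -> all (fun p => 0 <= p.1 <= s) hist ->
  P [set w | [/\ X (s + h) w = y, X s w = x & all (fun p => X p.1 w == p.2) hist]]
  = ((Pt h x y)%:E * P [set w | X s w = x /\ all (fun p => X p.1 w == p.2) hist])%E.

Local Notation p u x := (prob P [set w | X u w = x]).

Lemma prob_transition s h y : 0 <= s -> 0 <= h ->
  p (s + h) y = \sum_x Pt h x y * p s x.
Proof.
move=> s0 h0; pose Y w := (X s w, X (s + h) w).
have mY z : measurable [set w | Y w = z].
  rewrite (_ : [set w | Y w = z] = [set w | X s w = z.1] `&` [set w | X (s + h) w = z.2]).
    exact: measurableI.
  by case: z => a b; apply/seteqP; split=> w /=; rewrite /Y; [case=> -> -> | case=> -> ->].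
rewrite (_ : [set w | X (s + h) w = y] = [set w | (Y w).2 == y]); last first.
  by apply/seteqP; split=> w /= /eqP.
rewrite (prob_preimage P mY (fun z => z.2 == y)) (partition_big fst predT) //.
apply: eq_bigr => x _; rewrite (big_pred1 (x, y)); last first.
  by case=> a b; rewrite /= xpair_eqE andbC.
have := @Pt_markov s h [::] x y s0 h0 isT; rewrite /prob /=.
rewrite (_ : [set w | [/\ X (s + h) w = y, X s w = x & true]] = [set w | Y w = (x, y)]); last first.
  by apply/seteqP; split=> w /=; rewrite /Y; [case=> -> -> | case=> -> ->].
rewrite (_ : [set w | X s w = x /\ true] = [set w | X s w = x]); last first.
  by apply/seteqP; split=> w /=; [case | ].
by move=> ->; rewrite fineM ?fin_num_measure.
Qed.

Lemma Ex_increment (f : S -> R) s h : 0 <= s -> 0 <= h ->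
  Ex P X (s + h) f - Ex P X s f = \sum_x p s x * \sum_y (Pt h x y - (x == y)%:R) * f y.
Proof.
move=> s0 h0; rewrite /Ex.
under eq_bigr => y _ do rewrite prob_transition // mulr_suml.
rewrite exchange_big -sumrB; apply: eq_bigr => x _.
rewrite mulr_sumr; under [RHS]eq_bigr => y _ do rewrite mulrBl mulrBr.
rewrite sumrB; congr (_ - _); first by apply: eq_bigr => y _; ring.
rewrite (bigD1 x) //= eqxx mul1r big1 ?addr0 // => y /negbTE.
by rewrite eq_sym => ->; rewrite mul0r mulr0.
Qed.

Lemma transition_cvg0 x y : (fun h => Pt h x y - (x == y)%:R) @ 0^'+ --> 0.
Proof.
have : (fun h => h * (h^-1 * (Pt h x y - (x == y)%:R))) @ 0^'+ --> 0 * Q x y.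
  by apply: cvgM; [exact: cvg_at_right_filter | exact: Pt_generator].
rewrite mul0r; apply: cvg_trans; apply: near_eq_cvg; near=> h.
have h0 : 0 < h by near: h; exact: nbhs_right_gt.
by rewrite mulrA mulfV ?mul1r // gt_eqF.
Unshelve. all: by end_near. Qed.

Lemma generator_quotient_cvg (f : S -> R) x :
  (fun h => \sum_y h^-1 * (Pt h x y - (x == y)%:R) * f y) @ 0^'+ --> \sum_y Q x y * f y.
Proof. by apply: (cvg_big add_continuous) => // y _; apply: cvgMr_tmp; exact: Pt_generator. Qed.

Lemma prob_left_continuous t y : 0 < t -> (fun h => p (t - h) y) @ 0^'+ --> p t y.
Proof.
(* p (t - h) y = p t y - \sum_x (Pt h x y - [x == y]) p (t - h) x, and the sum
   vanishes as h -> 0+ because probabilities are bounded by 1. *)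
move=> t_gt0.
have : (fun h => \sum_x (Pt h x y - (x == y)%:R) * p (t - h) x) @ 0^'+ --> \sum_(x : S) 0.
  apply: (cvg_big add_continuous) => // x _.
  apply: (cvg_mul_bounded0 (M := 1)) (transition_cvg0 x y) _.
  by near=> h; rewrite ger0_norm ?prob_ge0 ?prob_le1.
rewrite big1 // => /(cvgB (cvg_cst (p t y))); rewrite subr0; apply: cvg_trans.
apply: near_eq_cvg; near=> h.
have h_gt0 : 0 < h by near: h; exact: nbhs_right_gt.
have h_lt : h < t by near: h; exact: nbhs_right_lt.
have := @prob_transition (t - h) h y; rewrite subrK => -> //; last first.
  by rewrite subr_ge0 ltW.
rewrite !fctE -sumrB; under eq_bigr => x _ do rewrite mulrBl opprB addrCA subrr addr0.
rewrite (bigD1 y) //= eqxx mul1r big1 ?addr0 // => x /negbTE ->.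
by rewrite mul0r.
Unshelve. all: by end_near. Qed.

Lemma deriv_Ex_transition (f : S -> R) t : 0 <= t ->
  deriv_at (fun u => Ex P X u f) t (Ex P X t (fun x => \sum_y Q x y * f y)).
Proof.
move=> t_ge0; split=> [|t_gt0].
  have : (fun h => \sum_x p t x * \sum_y h^-1 * (Pt h x y - (x == y)%:R) * f y)
      @ 0^'+ --> Ex P X t (fun x => \sum_y Q x y * f y).
    apply: (cvg_big add_continuous) => // x _.
    by apply: cvgMl_tmp; exact: generator_quotient_cvg.
  apply: cvg_trans; apply: near_eq_cvg; near=> h.
  have h_gt0 : 0 < h by near: h; exact: nbhs_right_gt.
  rewrite (Ex_increment _ t_ge0 (ltW h_gt0)) mulr_sumr; apply: eq_bigr => x _.
  by rewrite mulrCA; congr (_ * _); rewrite mulr_sumr; apply: eq_bigr => y _; rewrite mulrA.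
have : (fun h => \sum_x p (t - h) x * \sum_y h^-1 * (Pt h x y - (x == y)%:R) * f y)
    @ 0^'+ --> Ex P X t (fun x => \sum_y Q x y * f y).
  apply: (cvg_big add_continuous) => // x _.
  by apply: cvgM; [exact: prob_left_continuous | exact: generator_quotient_cvg].
rewrite cvg_at_leftNP oppr0; apply: cvg_trans; apply: near_eq_cvg; near=> h.
have h_gt0 : 0 < h by near: h; exact: nbhs_right_gt.
have h_lt : h < t by near: h; exact: nbhs_right_lt.
rewrite /comp invrN mulNr -mulrN opprB -[in Ex P X t f](subrK h t).
have th_ge0 : 0 <= t - h by rewrite subr_ge0 ltW.
rewrite (Ex_increment _ th_ge0 (ltW h_gt0)) mulr_sumr; apply: eq_bigr => x _.
by rewrite mulrCA; congr (_ * _); rewrite mulr_sumr; apply: eq_bigr => y _; rewrite mulrA.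
Unshelve. all: by end_near. Qed.

End kolmogorov_forward_equation.

Lemma deriv_Ex_ctmc (R : realType) d (Omega : measurableType d) (P : probability Omega R)
    (S : finType) (Q : S -> S -> R) (X : R -> Omega -> S) (f : S -> R) t :
  is_ctmc P Q X -> 0 <= t ->
  deriv_at (fun u => Ex P X u f) t (Ex P X t (fun x => \sum_y Q x y * f y)).
Proof.
by case=> mX _ [Pt [PtQ Pt_markov]]; exact: deriv_Ex_transition.
Qed.

Definition contacts (R : realType) (n m : nat) (grp : 'I_n -> 'I_m) (i j : 'I_m)
    (x : state n) : R :=
  \sum_(a in Sg grp i x) Ecount R grp j a x.

Section epidemic_generator.
Context (R : realType) (n m : nat) (grp : 'I_n -> 'I_m).
Context (B rho : 'I_m -> 'I_m -> R) (gamma : 'I_m -> R) (lambda : R).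

Local Notation Q := (genQ grp B rho gamma lambda).
Local Notation rate := (ev_rate grp B rho gamma lambda).

Lemma genQ_sum_events (x : state n) (f : state n -> R) :
  \sum_y Q x y * f y = \sum_(e : event n) rate e x * (f (ev_target e x) - f x).
Proof.
have -> : \sum_y Q x y * f y = \sum_y qrate grp B rho gamma lambda x y * (f y - f x).
  rewrite (bigD1 x) //= [RHS](bigD1 x) //= /genQ eqxx subrr mulr0 add0r.
  under [RHS]eq_bigr => y _ do rewrite mulrBr.
  rewrite sumrB -mulr_suml mulNr addrC; congr (_ - _).
  by apply: eq_big => // y yNx; rewrite eq_sym (negbTE yNx).
rewrite /qrate; under eq_bigr => y _ do rewrite mulr_suml.
rewrite exchange_big; apply: eq_bigr => e _.
rewrite (bigD1 (ev_target e x)) //= eqxx big1 ?addr0 // => y /negbTE.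
by rewrite eq_sym => ->; rewrite mul0r.
Qed.

Lemma sum_infection_events (x : state n) (f : state n -> R) i (K : R) :
  (forall a, dstate x a = Sus -> f (set_dis x a Inf) - f x = (grp a == i)%:R * K) ->
  \sum_a rate (inl (inl (inl a))) x * (f (set_dis x a Inf) - f x) =
  K * \sum_j B i j * contacts R grp i j x.
Proof.
move=> incr.
transitivity (\sum_(a in Sg grp i x) (\sum_k B i k * Ecount R grp k a x) * K).
  rewrite [RHS]big_mkcond; apply: eq_bigr => a _ /=; rewrite !inE.
  case: eqP => [aS|_]; last by rewrite mul0r.
  by rewrite incr //; case: eqP => [<-|_]; rewrite ?mul1r ?mul0r ?mulr0.
rewrite -mulr_suml mulrC exchange_big; congr (_ * _); apply: eq_bigr => j _.
by rewrite /contacts mulr_sumr.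
Qed.

Lemma sum_recovery_events (x : state n) (f : state n -> R) i (K : R) :
  (forall a, dstate x a = Inf -> f (set_dis x a Rec) - f x = (grp a == i)%:R * K) ->
  \sum_a rate (inl (inl (inr a))) x * (f (set_dis x a Rec) - f x) =
  K * gamma i * #|Ig grp i x|%:R.
Proof.
move=> incr.
transitivity (\sum_(a in Ig grp i x) gamma i * K).
  rewrite [RHS]big_mkcond; apply: eq_bigr => a _ /=; rewrite !inE.
  case: eqP => [aI|_]; last by rewrite mul0r.
  by rewrite incr //; case: eqP => [<-|_]; rewrite ?mul1r ?mul0r ?mulr0.
by rewrite sumr_const mulr_natr mulrC.
Qed.

Lemma genQ_disease_fun (x : state n) (f : state n -> R) i (Ki Kr : R) :
  (forall p v, f (set_edge x p v) = f x) ->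
  (forall a, dstate x a = Sus -> f (set_dis x a Inf) - f x = (grp a == i)%:R * Ki) ->
  (forall a, dstate x a = Inf -> f (set_dis x a Rec) - f x = (grp a == i)%:R * Kr) ->
  \sum_y Q x y * f y =
  Ki * \sum_j B i j * contacts R grp i j x + Kr * gamma i * #|Ig grp i x|%:R.
Proof.
move=> edge_inv inf_incr rec_incr.
rewrite genQ_sum_events /event !big_sumType /= !(big1 _ _ (fun p : pairT n => _)) ?addr0.
- by rewrite (sum_infection_events inf_incr) (sum_recovery_events rec_incr).
- by move=> p _; rewrite edge_inv subrr mulr0.
- by move=> p _; rewrite edge_inv subrr mulr0.
Qed.

Let InfNSus : (Inf == Sus) = false. Proof. by apply/eqP. Qed.
Let RecNSus : (Rec == Sus) = false. Proof. by apply/eqP. Qed.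
Let RecNInf : (Rec == Inf) = false. Proof. by apply/eqP. Qed.
Let SusNInf : (Sus == Inf) = false. Proof. by apply/eqP. Qed.

Let dstate_set_dis (x : state n) a v c :
  dstate (set_dis x a v) c = if c == a then v else dstate x c.
Proof. by rewrite /dstate ffunE. Qed.

Let Sg_set_disD1 (x : state n) a v i : Sg grp i (set_dis x a v) :\ a = Sg grp i x :\ a.
Proof. by apply/setP => c; rewrite !inE dstate_set_dis; case: (c == a). Qed.

Let Ig_set_disD1 (x : state n) a v i : Ig grp i (set_dis x a v) :\ a = Ig grp i x :\ a.
Proof. by apply/setP => c; rewrite !inE dstate_set_dis; case: (c == a). Qed.

Lemma card_Sg_infect (x : state n) a i : dstate x a = Sus ->
  #|Sg grp i (set_dis x a Inf)|%:R = #|Sg grp i x|%:R - (grp a == i)%:R :> R.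
Proof.
move=> aS; rewrite (cardsD1 a (Sg _ _ (set_dis _ _ _))) (cardsD1 a (Sg grp i x)).
by rewrite Sg_set_disD1 !inE !dstate_set_dis eqxx aS InfNSus eqxx /= natrD; ring.
Qed.

Lemma card_Ig_infect (x : state n) a i : dstate x a = Sus ->
  #|Ig grp i (set_dis x a Inf)|%:R = #|Ig grp i x|%:R + (grp a == i)%:R :> R.
Proof.
move=> aS; rewrite (cardsD1 a (Ig _ _ (set_dis _ _ _))) (cardsD1 a (Ig grp i x)).
by rewrite Ig_set_disD1 !inE !dstate_set_dis eqxx aS SusNInf eqxx /= natrD; ring.
Qed.

Lemma card_Sg_recover (x : state n) a i : dstate x a = Inf ->
  #|Sg grp i (set_dis x a Rec)| = #|Sg grp i x|.
Proof.
move=> aI; rewrite (cardsD1 a (Sg _ _ (set_dis _ _ _))) (cardsD1 a (Sg grp i x)).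
by rewrite Sg_set_disD1 !inE !dstate_set_dis eqxx aI RecNSus InfNSus.
Qed.

Lemma card_Ig_recover (x : state n) a i : dstate x a = Inf ->
  #|Ig grp i (set_dis x a Rec)|%:R = #|Ig grp i x|%:R - (grp a == i)%:R :> R.
Proof.
move=> aI; rewrite (cardsD1 a (Ig _ _ (set_dis _ _ _))) (cardsD1 a (Ig grp i x)).
by rewrite Ig_set_disD1 !inE !dstate_set_dis eqxx aI RecNInf eqxx /= natrD; ring.
Qed.

End epidemic_generator.

Section contact_expectation.
Context (R : realType) (n m : nat) (grp : 'I_n -> 'I_m).
Context d (Omega : measurableType d) (P : probability Omega R).
Context (X : R -> Omega -> state n) (t : R).
Context (chi : 'I_m -> 'I_m -> R -> {set 'I_n} * {set 'I_n} -> R).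
Hypothesis mXt : forall x, measurable [set w | X t w = x].
Hypothesis chiP : forall i j (k : {set 'I_n} * {set 'I_n}) a b,
  a \in k.1 -> grp a = i -> b \in k.2 -> grp b = j ->
  ((chi i j t k)%:E * P [set w | SIof (X t w) = k])%E
  = P [set w | edgeb (X t w) a b /\ SIof (X t w) = k].

Local Notation p x := (prob P [set w | X t w = x]).

Lemma sum_prob_edge_SI i j (k : {set 'I_n} * {set 'I_n}) a b :
  a \in k.1 -> grp a = i -> b \in k.2 -> grp b = j ->
  \sum_(x | SIof x == k) p x * (edgeb x a b)%:R = chi i j t k * \sum_(x | SIof x == k) p x.
Proof.
move=> ak ai bk bj; have := congr1 fine (chiP ak ai bk bj).
rewrite (_ : [set w | SIof (X t w) = k] = [set w | SIof (X t w) == k]); last first.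
  by apply/seteqP; split=> w /= /eqP.
rewrite (_ : [set w | edgeb _ a b /\ _] = [set w | (SIof (X t w) == k) && edgeb (X t w) a b]).
  rewrite fineM ?fin_num_measure //; last exact: (measurable_preimage mXt (fun x => SIof x == k)).
  rewrite -!/(prob _ _) (prob_preimage P mXt (fun x => SIof x == k)).
  rewrite (prob_preimage P mXt (fun x => (SIof x == k) && edgeb x a b)) => ->.
  by rewrite [RHS]big_mkcondr; apply: eq_bigr => x _; case: edgeb; rewrite ?mulr1 ?mulr0.
by apply/seteqP; split=> w /=; [case=> -> /eqP -> | case/andP=> /eqP -> ->].
Qed.

Lemma Ex_contacts i j (g : {set 'I_n} * {set 'I_n} -> R) :
  Ex P X t (fun x => g (SIof x) * contacts R grp i j x) =
  Ex P X t (fun x => g (SIof x) * chi i j t (SIof x) * #|Sg grp i x|%:R * #|Ig grp j x|%:R).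
Proof.
rewrite /Ex (partition_big (@SIof n) predT) // [RHS](partition_big (@SIof n) predT) //.
apply: eq_bigr => k _ /=.
set Sk := [set a in k.1 | grp a == i]; set Ik := [set b in k.2 | grp b == j].
set Pk := \sum_(x | SIof x == k) p x.
have edge_k a b : a \in Sk -> b \in Ik ->
    \sum_(x | SIof x == k) p x * (edgeb x a b)%:R = chi i j t k * Pk.
  by rewrite !inE => /andP[ak /eqP ai] /andP[bk /eqP bj]; exact: sum_prob_edge_SI.
transitivity (\sum_(x | SIof x == k) p x * (g k * \sum_(a in Sk) \sum_(b in Ik) (edgeb x a b)%:R)).
  by apply: eq_bigr => x /eqP SIx; rewrite /Sk /Ik -SIx.
transitivity (\sum_(x | SIof x == k) p x * (g k * chi i j t k * #|Sk|%:R * #|Ik|%:R)); last first.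
  by apply: eq_bigr => x /eqP SIx; rewrite /Sk /Ik -SIx.
rewrite -mulr_suml -/Pk.
under eq_bigr => x _ do rewrite mulrCA mulr_sumr.
rewrite -mulr_sumr exchange_big /=.
under eq_bigr => a _ do (under eq_bigr => x _ do rewrite mulr_sumr; rewrite exchange_big /=).
rewrite (eq_bigr (fun=> \sum_(b in Ik) chi i j t k * Pk)) => [|a Ska]; last first.
  by apply: eq_bigr => b Ikb; exact: edge_k.
rewrite !sumr_const -[_ *+ #|Ik|]mulr_natl -[_ *+ #|Sk|]mulr_natl.
by ring.
Qed.

End contact_expectation.

Section moment_equations.
Context (R : realType) (n m : nat) (grp : 'I_n -> 'I_m).
Context (B rho : 'I_m -> 'I_m -> R) (gamma : 'I_m -> R) (lambda : R).
Context d (Omega : measurableType d) (P : probability Omega R) (X : R -> Omega -> state n).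
Context (chi : 'I_m -> 'I_m -> R -> {set 'I_n} * {set 'I_n} -> R) (t : R) (i : 'I_m).
Hypothesis n_gt0 : (0 < n)%N.
Hypothesis X_ctmc : is_ctmc P (genQ grp B rho gamma lambda) X.
Hypothesis t_ge0 : 0 <= t.
Hypothesis chiP : forall i j (k : {set 'I_n} * {set 'I_n}) a b,
  a \in k.1 -> grp a = i -> b \in k.2 -> grp b = j ->
  ((chi i j t k)%:E * P [set w | SIof (X t w) = k])%E
  = P [set w | edgeb (X t w) a b /\ SIof (X t w) = k].

Local Notation E := (Ex P X t).
Local Notation nchi j x := (n%:R * chi i j t (SIof x)).

Lemma deriv_Ex_disease_fun (f : state n -> R) (Ki : {set 'I_n} * {set 'I_n} -> R)
    (Kr : state n -> R) (l : R) :
  (forall x p v, f (set_edge x p v) = f x) ->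
  (forall x a, dstate x a = Sus -> f (set_dis x a Inf) - f x = (grp a == i)%:R * Ki (SIof x)) ->
  (forall x a, dstate x a = Inf -> f (set_dis x a Rec) - f x = (grp a == i)%:R * Kr x) ->
  l = \sum_j B i j * E (fun x => Ki (SIof x) * chi i j t (SIof x) *
                                 #|Sg grp i x|%:R * #|Ig grp j x|%:R)
      + gamma i * E (fun x => Kr x * #|Ig grp i x|%:R) ->
  deriv_at (fun u => Ex P X u f) t l.
Proof.
move=> edge_inv inf_incr rec_incr ->.
have mXt x : measurable [set w | X t w = x] by case: X_ctmc.
suff -> : \sum_j B i j * E (fun x => Ki (SIof x) * chi i j t (SIof x) *
                                     #|Sg grp i x|%:R * #|Ig grp j x|%:R)
          + gamma i * E (fun x => Kr x * #|Ig grp i x|%:R)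
        = E (fun x => \sum_y genQ grp B rho gamma lambda x y * f y).
  exact: deriv_Ex_ctmc.
rewrite (eq_Ex (fun x =>
  genQ_disease_fun B rho gamma lambda (edge_inv x) (inf_incr x) (rec_incr x))) ExD.
congr (_ + _); last by rewrite -ExZ; apply: eq_Ex => x; ring.
under eq_Ex => x do rewrite mulr_sumr.
rewrite Ex_sum; apply: eq_bigr => j _.
under [RHS]eq_Ex => x do rewrite mulrCA.
rewrite ExZ (Ex_contacts mXt chiP); congr (_ * _); apply: eq_Ex => x; rewrite !mulrA.
Qed.

Let n_neq0 : n%:R != 0 :> R.
Proof. by rewrite pnatr_eq0 -lt0n. Qed.

Lemma deriv_Ex_sfrac :
  deriv_at (fun u => Ex P X u (sfrac grp i)) t
    (- \sum_j B i j * E (fun x => nchi j x * sfrac grp i x * bfrac grp j x)).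
Proof.
apply: (deriv_Ex_disease_fun (Ki := fun=> - n%:R^-1) (Kr := fun=> 0)) => //.
- by move=> x a aS; rewrite /sfrac card_Sg_infect //; ring.
- by move=> x a aI; rewrite /sfrac card_Sg_recover // subrr mulr0.
rewrite ExZ mul0r mulr0 addr0 -sumrN; apply: eq_bigr => j _.
rewrite -mulrN -ExN; congr (_ * _); apply: eq_Ex => x.
by rewrite /sfrac /bfrac; field.
Qed.

Lemma deriv_Ex_bfrac :
  deriv_at (fun u => Ex P X u (bfrac grp i)) t
    (\sum_j B i j * E (fun x => nchi j x * sfrac grp i x * bfrac grp j x)
     - gamma i * E (bfrac grp i)).
Proof.
apply: (deriv_Ex_disease_fun (Ki := fun=> n%:R^-1) (Kr := fun=> - n%:R^-1)) => //.
- by move=> x a aS; rewrite /bfrac card_Ig_infect //; ring.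
- by move=> x a aI; rewrite /bfrac card_Ig_recover //; ring.
congr (_ + _).
  apply: eq_bigr => j _; congr (_ * _); apply: eq_Ex => x.
  by rewrite /sfrac /bfrac; field.
rewrite -mulrN -ExN; congr (_ * _); apply: eq_Ex => x.
by rewrite /bfrac; field.
Qed.

Lemma deriv_Ex_sfrac_sq :
  deriv_at (fun u => Ex P X u (fun x => sfrac grp i x ^+ 2)) t
    (- \sum_j (2 * B i j * E (fun x => nchi j x * sfrac grp i x ^+ 2 * bfrac grp j x)
              - B i j * E (fun x => nchi j x * sfrac grp i x * bfrac grp j x) / n%:R)).
Proof.
apply: (deriv_Ex_disease_fun
  (Ki := fun k => (1 - 2 * #|[set a in k.1 | grp a == i]|%:R) / n%:R ^+ 2) (Kr := fun=> 0)) => //.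
- move=> x a aS; rewrite /sfrac card_Sg_infect //= -/(Sg grp i x).
  by case: (grp a == i); rewrite /= ?subr0 ?subrr ?mul0r //; field.
- by move=> x a aI; rewrite /sfrac card_Sg_recover // subrr mulr0.
rewrite ExZ mul0r mulr0 addr0 -sumrN; apply: eq_bigr => j _.
rewrite /Ex !mulr_sumr !mulr_suml -sumrB -sumrN; apply: eq_bigr => x _.
by rewrite /sfrac /bfrac /= -/(Sg grp i x); field.
Qed.

Lemma deriv_Ex_bfrac_sq :
  deriv_at (fun u => Ex P X u (fun x => bfrac grp i x ^+ 2)) t
    (\sum_j B i j * (2 * E (fun x => nchi j x * sfrac grp i x * bfrac grp j x * bfrac grp i x)
                     + E (fun x => nchi j x * sfrac grp i x * bfrac grp j x) / n%:R)
     - gamma i * (2 * E (fun x => bfrac grp i x ^+ 2) - E (bfrac grp i) / n%:R)).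
Proof.
apply: (deriv_Ex_disease_fun
  (Ki := fun k => (2 * #|[set a in k.2 | grp a == i]|%:R + 1) / n%:R ^+ 2)
  (Kr := fun x => (1 - 2 * #|Ig grp i x|%:R) / n%:R ^+ 2)) => //.
- move=> x a aS; rewrite /bfrac card_Ig_infect //= -/(Ig grp i x).
  by case: (grp a == i); rewrite /= ?subr0 ?subrr ?mul0r //; field.
- move=> x a aI; rewrite /bfrac card_Ig_recover //.
  by case: (grp a == i); rewrite /= ?subr0 ?subrr ?mul0r //; field.
congr (_ + _).
  apply: eq_bigr => j _; congr (_ * _).
  rewrite /Ex !mulr_sumr !mulr_suml -big_split; apply: eq_bigr => x _.
  by rewrite /sfrac /bfrac /= -/(Ig grp i x); field.
rewrite /Ex !mulr_sumr !mulr_suml -sumrB mulr_sumr -sumrN; apply: eq_bigr => x _.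
by rewrite /bfrac; field.
Qed.

End moment_equations.

Theorem proposition1
  (R : realType) (n m : nat) (grp : 'I_n -> 'I_m)
  (B rho : 'I_m -> 'I_m -> R) (gamma : 'I_m -> R) (lambda : R)
  (d : measure_display) (Omega : measurableType d) (P : probability Omega R)
  (X : R -> Omega -> state n)
  (chi : 'I_m -> 'I_m -> R -> {set 'I_n} * {set 'I_n} -> R) :
  (0 < n)%N ->
  (forall i j, 0 <= B i j) ->
  (forall i j, 0 < rho i j) ->
  (forall i j, rho i j / n%:R <= 1) ->
  (forall i, 0 < gamma i) ->
  0 < lambda ->
  is_ctmc P (genQ grp B rho gamma lambda) X ->
  (* chi_ij(t, S, I) = Pr((a,b) in E(t) | S(t), I(t)) for every pair
     (a,b) in S_i(t) x I_j(t), independently of the pair *)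
  (forall (t : R) (i j : 'I_m) (k : {set 'I_n} * {set 'I_n}) (a b : 'I_n),
     0 <= t -> a \in k.1 -> grp a = i -> b \in k.2 -> grp b = j ->
     ((chi i j t k)%:E * P [set w | SIof (X t w) = k])%E
     = P [set w | edgeb (X t w) a b /\ SIof (X t w) = k]) ->
  forall (t : R) (i : 'I_m), 0 <= t ->
  let E := Ex P X t in
  let nchi j x := n%:R * chi i j t (SIof x) in
  [/\ (* (i) *)
      deriv_at (fun u => Ex P X u (sfrac grp i)) t
        (- \sum_(j < m) B i j *
             E (fun x => nchi j x * sfrac grp i x * bfrac grp j x)),
      (* (ii) *)
      deriv_at (fun u => Ex P X u (bfrac grp i)) t
        (\sum_(j < m) B i j *
             E (fun x => nchi j x * sfrac grp i x * bfrac grp j x)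
         - gamma i * E (bfrac grp i)),
      (* (iii) *)
      deriv_at (fun u => Ex P X u (fun x => sfrac grp i x ^+ 2)) t
        (- \sum_(j < m)
             (2 * B i j *
                E (fun x => nchi j x * sfrac grp i x ^+ 2 * bfrac grp j x)
              - B i j *
                E (fun x => nchi j x * sfrac grp i x * bfrac grp j x) / n%:R))
    & (* (iv) *)
      deriv_at (fun u => Ex P X u (fun x => bfrac grp i x ^+ 2)) t
        (\sum_(j < m) B i j *
           (2 * E (fun x => nchi j x * sfrac grp i x * bfrac grp j x
                              * bfrac grp i x)
            + E (fun x => nchi j x * sfrac grp i x * bfrac grp j x) / n%:R)
         - gamma i * (2 * E (fun x => bfrac grp i x ^+ 2)
                      - E (bfrac grp i) / n%:R))].
Proof.
move=> n_gt0 _ _ _ _ _ X_ctmc chiP t i t_ge0 E nchi.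
have chiP_t i j k a b := chiP t i j k a b t_ge0.
split.
- exact: deriv_Ex_sfrac n_gt0 X_ctmc t_ge0 chiP_t.
- exact: deriv_Ex_bfrac n_gt0 X_ctmc t_ge0 chiP_t.
- exact: deriv_Ex_sfrac_sq n_gt0 X_ctmc t_ge0 chiP_t.
- exact: deriv_Ex_bfrac_sq n_gt0 X_ctmc t_ge0 chiP_t.
Qed.
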